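(* The action of $L$ on $V(G_{E_8})$ has exactly 15 orbits, each of size 8, and each orbit is a clique of size 8 in $G_{E_8}$; thus the orbits partition $V(G_{E_8})$ into 15 cliques of size 8.
   Context: The $E_8$ root system $\Psi_{E_8}\subset\mathbb{R}^8$ consists of the 240 vectors $\pm e_i\pm e_j$ ($1\le i<j\le 8$) and all $x\in\{\pm1\}^8$ with $\prod_i x_i=1$. $G_{E_8}$ is the graph with vertices $v_x$, $x\in\Psi_{E_8}$, where $v_x=v_{-x}$, and $v_x\sim v_y$ iff $\langle x,y\rangle=0$. Let $I=\mathrm{diag}(1,1)$, $X=\begin{pmatrix}0&1\\1&0\end{pmatrix}$, $Z=\mathrm{diag}(1,-1)$, $Y=XZ$. For $M=M_1\otimes M_2\otimes M_3$ with $M_i\in\{I,X,Y,Z\}$, $\sigma_M:v_x\mapsto v_{Mx}$ is an automorphism of $G_{E_8}$, and $L=\{\sigma_M\}\cong\mathbb{Z}_2^6$ is the resulting subgroup of $\mathrm{Aut}(G_{E_8})$. *)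

From HB Require Import structures.
From mathcomp Require Import all_boot all_order all_algebra.
Set Implicit Arguments. Unset Strict Implicit. Unset Printing Implicit Defensive.
Import Order.TTheory GRing.Theory Num.Theory.
Local Open Scope ring_scope.

(* Coordinates e_1,...,e_8 of R^8 are indexed by i : 'I_8 (e_{k+1} <-> k).
   All vectors involved (roots and their images under the signed permutation
   matrices M) have entries in {-1,0,1}; we encode such vectors as finite
   functions 'I_8 -> 'I_3 (entry k in 'I_3 stands for the integer k - 1),
   which gives a finite type. *)
Definition Vec := {ffun 'I_8 -> 'I_3}.

Definition toZ (x : Vec) : 'cV[int]_8 := \col_i ((x i)%:Z - 1).

(* encoding of an integer (meaningful on {-1,0,1}) *)
Definition code (z : int) : 'I_3 :=
  if z == 0 then inord 1 else if 0 < z then inord 2 else inord 0.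
Definition ofZ (v : 'cV[int]_8) : Vec := [ffun i => code (v i 0)].

Definition sgn (b : bool) : int := if b then -1 else 1.
Definition evec (i : 'I_8) : 'cV[int]_8 := \col_k (k == i)%:R.

Definition E8root (x : Vec) : bool :=
  [exists i : 'I_8, exists j : 'I_8, exists s : bool, exists t : bool,
     (i < j)%N && (toZ x == sgn s *: evec i + sgn t *: evec j)]
  || ([forall i, toZ x i 0 != 0] && (\prod_i toZ x i 0 == 1)).

Definition inner (x y : Vec) : int := \sum_i toZ x i 0 * toZ y i 0.

Definition negv (x : Vec) : Vec := ofZ (- toZ x).

(* vertices of G_E8: v_x = v_{-x} is represented by the set {x, -x} *)
Definition E8vertices : {set {set Vec}} :=
  [set [set x; negv x] | x in [set x | E8root x]].

(* adjacency: v_x ~ v_y iff <x,y> = 0 (independent of the representatives) *)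
Definition E8adj (u v : {set Vec}) : bool :=
  [exists x in u, exists y in v, inner x y == 0].

Definition PI : 'M[int]_2 := 1%:M.
Definition PX : 'M[int]_2 := \matrix_(i, j) (i != j)%:R.
Definition PZ : 'M[int]_2 := \matrix_(i, j) (if i == j then (if i == 0 then 1 else -1) else 0).
Definition PY : 'M[int]_2 := PX *m PZ.

Definition pauli (k : 'I_4) : 'M[int]_2 :=
  match val k with 0 => PI | 1 => PX | 2 => PY | _ => PZ end.

Definition bit (n : nat) (i : 'I_8) : 'I_2 := inord (odd (i %/ 2 ^ n)).

(* Kronecker product M1 (x) M2 (x) M3 (standard row-major index convention) *)
Definition kron3 (A B C : 'M[int]_2) : 'M[int]_8 :=
  \matrix_(i, j) (A (bit 2 i) (bit 2 j) * B (bit 1 i) (bit 1 j) * C (bit 0 i) (bit 0 j)).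

(* L is indexed by (M1, M2, M3) in {I,X,Y,Z}^3 *)
Definition Lidx := ('I_4 * 'I_4 * 'I_4)%type.
Definition Lmat (g : Lidx) : 'M[int]_8 :=
  kron3 (pauli g.1.1) (pauli g.1.2) (pauli g.2).

Definition actv (g : Lidx) (x : Vec) : Vec := ofZ (Lmat g *m toZ x).
Definition sigma (g : Lidx) (v : {set Vec}) : {set Vec} := actv g @: v.

Definition Lorbit (v : {set Vec}) : {set {set Vec}} := [set sigma g v | g : Lidx].

Definition is_clique (O : {set {set Vec}}) : bool :=
  [forall u in O, forall v in O, (u != v) ==> E8adj u v].

From mathcomp Require Import all_boot all_order all_algebra.
Set Implicit Arguments. Unset Strict Implicit. Unset Printing Implicit Defensive.
Import Order.TTheory GRing.Theory Num.Theory.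
Local Open Scope ring_scope.

(* Since [ofZ] only reads the signs of the entries of M x, it commutes with x |-> -x and
   sigma_M (v_x) = v_(M x); everything else is a finite computation on integer coordinate
   lists.  For one root x of each pair +-x we compute the 64 vectors M x, keep one
   representative of each pair +-M x, and check by evaluation that there are 8 of them,
   that they are pairwise orthogonal, and that the orbit of each of them stays inside the
   orbit of x.  The last fact makes the orbits a partition of the 120 vertices, and as
   each orbit has 8 elements there are 120 / 8 = 15 of them. *)

Section Representatives.
Variables (T : eqType) (f : T -> T).

Definition reps (l : seq T) : seq T :=
  foldr (fun u S => if (u \in S) || (f u \in S) then S else u :: S) [::] l.

Lemma reps_sub l : {subset reps l <= l}.
Proof.
elim: l => [|a l IH] //= u; rewrite in_cons; case: ifP => _; first by move/IH->; rewrite orbT.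
by rewrite in_cons => /orP [-> // | /IH ->]; rewrite orbT.
Qed.

Lemma reps_cover l u : u \in l -> (u \in reps l) || (f u \in reps l).
Proof.
elim: l => [|a l IH] //=; rewrite in_cons => /orP [/eqP -> | /IH]; case: ifP => // _.
  by rewrite mem_head.
by rewrite !in_cons => /orP [] ->; rewrite !orbT.
Qed.

Lemma reps_uniq l : uniq (reps l).
Proof. by elim: l => [|a l IH] //=; case: ifP => //= /norP [-> _]. Qed.

Hypothesis fK : involutive f.

Lemma reps_antipodal l : {in reps l &, forall s t, s = f t -> s = t}.
Proof.
elim: l => [|a l IH] //=; case: ifP => [_ // | /norP [aS faS]] s t.
rewrite !in_cons => /orP [/eqP -> | sS] /orP [/eqP -> | tS] // E.
- by rewrite E fK tS in faS.
- by rewrite -E sS in faS.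
- exact: IH.
Qed.

End Representatives.

Section Words.
Variables (T : eqType) (a : seq T).

Fixpoint words (n : nat) : seq (seq T) :=
  if n is n'.+1 then [seq z :: w | z <- a, w <- words n'] else [:: [::]].

Lemma mem_words n w : (w \in words n) = (size w == n) && all (mem a) w.
Proof.
elim: n w => [|n IH] [|z w] //=.
  by apply/allpairsP => -[[? ?] []].
apply/allpairsP/idP => [[[y v] /= [ya vn [-> ->]]] | /andP [sz /andP [za aw]]].
  by move: vn; rewrite IH eqSS /= ya => /andP [-> ->].
by exists (z, w); rewrite IH -eqSS sz aw.
Qed.

End Words.

Definition coords (x : Vec) : seq int := mkseq (fun k => toZ x (inord k) 0) 8.

Lemma size_coords x : size (coords x) = 8%N.
Proof. exact: size_mkseq. Qed.

Lemma nth_coords x (i : 'I_8) : nth 0 (coords x) i = toZ x i 0.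
Proof. by rewrite nth_mkseq // inord_val. Qed.

Lemma coords_inj : injective coords.
Proof.
move=> x y E; apply/ffunP => i; have := congr1 (nth 0 ^~ (i : nat)) E.
by rewrite /= !nth_coords !mxE => /addIr /eqP; rewrite eqz_nat => /eqP /val_inj.
Qed.

Lemma toZ_range x i : toZ x i 0 \in [:: -1; 0; 1].
Proof. by rewrite mxE; case: (x i) => [[|[|[|n]]] ?]. Qed.

Lemma sgz_range (z : int) : z \in [:: -1; 0; 1] -> sgz z = z.
Proof. by rewrite !inE => /or3P [] /eqP ->. Qed.

Lemma toZ_ofZ v i : toZ (ofZ v) i 0 = sgz (v i 0).
Proof. by rewrite !mxE ffunE /code /sgz; case: ltrgt0P => _; rewrite inordK. Qed.

Definition negs (v : seq int) : seq int := map -%R v.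

Lemma coords_negv x : coords (negv x) = negs (coords x).
Proof.
rewrite /negs -map_comp; apply: eq_map => k /=.
by rewrite toZ_ofZ mxE sgzN sgz_range ?toZ_range.
Qed.

Lemma negsK : involutive negs.
Proof.
by move=> v; rewrite /negs -map_comp (eq_map (g := id)) ?map_id // => z /=; rewrite opprK.
Qed.

Lemma negvK : involutive negv.
Proof. by move=> x; apply: coords_inj; rewrite !coords_negv negsK. Qed.

Definition dots (v w : seq int) : int := foldr +%R 0 [seq p.1 * p.2 | p <- zip v w].

Lemma dots_mkseq n (f g : nat -> int) :
  dots (mkseq f n) (mkseq g n) = \sum_(k < n) f k * g k.
Proof.
rewrite /dots zip_map foldrE !big_map.
by rewrite -(big_mkord xpredT (fun k => f k * g k)) /index_iota subn0.
Qed.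

Lemma dots_negr v w : dots v (negs w) = - dots v w.
Proof.
elim: v w => [|a v IH] [|b w]; rewrite /= ?oppr0 //.
by rewrite /dots /= -/(dots v (negs w)) -/(dots v w) IH mulrN opprD.
Qed.

Lemma inner_coords x y : inner x y = dots (coords x) (coords y).
Proof. by rewrite dots_mkseq; apply: eq_bigr => i _; rewrite inord_val. Qed.

Definition pauli_entry (a u v : nat) : int :=
  match a with
  | 0%N => (u == v)%:R
  | 1%N => (u != v)%:R
  | 2%N => (u != v)%:R * (if v == 0%N then 1 else -1)
  | _ => if u == v then (if u == 0%N then 1 else -1) else 0
  end.

Lemma pauliE (k : 'I_4) (u v : 'I_2) : pauli k u v = pauli_entry k u v.
Proof.
case: k => [[|[|[|[|k]]]] ?] //; case: u => [[|[|u]] ?] //; case: v => [[|[|v]] ?] //;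
by rewrite /pauli /= ?/PI ?/PX ?/PY ?/PZ !mxE //= ?big_ord_recl ?big_ord0 !mxE.
Qed.

(* The computational model indexes by naturals: [inord] does not reduce in the VM, as it
   goes through the opaque [idP]. *)
Definition bitn (n m : nat) : nat := odd (m %/ 2 ^ n).

Definition Lentry (t : nat * nat * nat) (m k : nat) : int :=
  pauli_entry t.1.1 (bitn 2 m) (bitn 2 k) * pauli_entry t.1.2 (bitn 1 m) (bitn 1 k)
  * pauli_entry t.2 (bitn 0 m) (bitn 0 k).

Definition Lidx_nat (g : Lidx) : nat * nat * nat := (g.1.1 : nat, g.1.2 : nat, g.2 : nat).

Lemma Lmat_inord g m k : (m < 8)%N -> (k < 8)%N ->
  Lmat g (inord m) (inord k) = Lentry (Lidx_nat g) m k.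
Proof.
by move=> lt_m lt_k; rewrite mxE !pauliE /bit !inordK //; case: odd.
Qed.

Definition act_rows (A : seq (seq int)) (v : seq int) : seq int := [seq sgz (dots r v) | r <- A].

Lemma act_rows_negs A v : act_rows A (negs v) = negs (act_rows A v).
Proof. by rewrite /negs -map_comp; apply: eq_map => r /=; rewrite dots_negr sgzN. Qed.

Definition Lmat_rows (t : nat * nat * nat) : seq (seq int) :=
  mkseq (fun m => mkseq (Lentry t m) 8) 8.

Lemma coords_actv g x : coords (actv g x) = act_rows (Lmat_rows (Lidx_nat g)) (coords x).
Proof.
apply: (@eq_from_nth _ 0) => [|m]; rewrite ?size_map ?size_mkseq // => lt_m.
rewrite (nth_map [::]) ?size_mkseq // !nth_mkseq // toZ_ofZ mxE dots_mkseq.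
congr sgz; apply: eq_bigr => k _.
by rewrite -Lmat_inord // !inord_val.
Qed.

Lemma actv_negv g x : actv g (negv x) = negv (actv g x).
Proof. by apply: coords_inj; rewrite coords_negv !coords_actv coords_negv act_rows_negs. Qed.

Definition Ltriples : seq (nat * nat * nat) :=
  [seq (ab, c) | ab <- [seq (a, b) | a <- iota 0 4, b <- iota 0 4], c <- iota 0 4].

Lemma LtriplesP t : reflect (exists g, t = Lidx_nat g) (t \in Ltriples).
Proof.
rewrite /Ltriples; apply: (iffP idP) => [| [g ->]].
  case/allpairsP => -[ab c] [/allpairsP [[a b] [a4 b4 ->]] c4 ->].
  rewrite !mem_iota /= in a4 b4 c4.
  by exists (Ordinal a4, Ordinal b4, Ordinal c4).
apply/allpairsP; exists ((g.1.1 : nat, g.1.2 : nat), g.2 : nat).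
split; rewrite ?mem_iota ?add0n ?ltn_ord //.
by apply/allpairsP; exists (g.1.1 : nat, g.1.2 : nat); rewrite !mem_iota !add0n !ltn_ord.
Qed.

Definition Lmats : seq (seq (seq int)) := map Lmat_rows Ltriples.

Definition orbitc (v : seq int) : seq (seq int) := [seq act_rows A v | A <- Lmats].

Lemma orbitcP x u :
  reflect (exists g, u = coords (actv g x)) (u \in orbitc (coords x)).
Proof.
apply: (iffP mapP) => [[A /mapP [t /LtriplesP [g ->] ->] ->] | [g ->]].
  by exists g; rewrite coords_actv.
exists (Lmat_rows (Lidx_nat g)); last exact: coords_actv.
by apply: map_f; apply/LtriplesP; exists g.
Qed.

Definition short_root (i j : nat) (s t : bool) : seq int :=
  mkseq (fun k => sgn s * (k == i)%:R + sgn t * (k == j)%:R) 8.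

Definition short_roots : seq (seq int) :=
  [seq short_root ij.1 ij.2 st.1 st.2
     | ij <- [seq ij <- [seq (i, j) | i <- iota 0 8, j <- iota 0 8] | (ij.1 < ij.2)%N],
       st <- [seq (s, t) | s <- [:: true; false], t <- [:: true; false]]].

Definition long_roots : seq (seq int) := [seq v <- words [:: -1; 1] 8 | foldr *%R 1 v == 1].

Definition roots : seq (seq int) := short_roots ++ long_roots.

Lemma toZ_eq_coords x w : (toZ x == w) = (coords x == mkseq (fun k => w (inord k) 0) 8).
Proof.
apply/eqP/eqP => [<- // | E]; apply/matrixP => i j; rewrite (ord1 j).
by rewrite -nth_coords E nth_mkseq // inord_val.
Qed.

Lemma mkseq_evec (i j : 'I_8) s t :
  mkseq (fun k => (sgn s *: evec i + sgn t *: evec j) (inord k) 0) 8 = short_root i j s t.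
Proof.
apply/eq_in_map => k; rewrite mem_iota => /= lt_k.
by rewrite !mxE -!(inj_eq val_inj) /= !inordK.
Qed.

Lemma short_rootsP x :
  [exists i : 'I_8, exists j : 'I_8, exists s : bool, exists t : bool,
     (i < j)%N && (toZ x == sgn s *: evec i + sgn t *: evec j)] = (coords x \in short_roots).
Proof.
apply/idP/idP.
  case/existsP => i /existsP [j /existsP [s /existsP [t /andP [lt_ij]]]].
  rewrite toZ_eq_coords mkseq_evec => /eqP ->.
  apply/allpairsP; exists ((i : nat, j : nat), (s, t)); split => //.
    rewrite mem_filter lt_ij; apply/allpairsP; exists (i : nat, j : nat).
    by rewrite !mem_iota !add0n !ltn_ord.
  by apply/allpairsP; exists (s, t); case: s; case: t.
case/allpairsP => -[[i j] [s t]] [+ _ E].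
rewrite mem_filter => /andP [lt_ij].
case/allpairsP => -[i' j'] [i8 j8 [eq_i eq_j]]; subst i' j'.
move: i8 j8 lt_ij E; rewrite !mem_iota !add0n /= => i8 j8 lt_ij E.
apply/existsP; exists (Ordinal i8); apply/existsP; exists (Ordinal j8).
apply/existsP; exists s; apply/existsP; exists t.
by rewrite toZ_eq_coords mkseq_evec E eqxx andbT.
Qed.

Lemma long_rootsP x :
  [forall i, toZ x i 0 != 0] && (\prod_i toZ x i 0 == 1) = (coords x \in long_roots).
Proof.
rewrite mem_filter mem_words size_coords eqxx andTb andbC; congr andb.
  rewrite (eq_bigr (fun i : 'I_8 => toZ x (inord i) 0)) => [|i _]; last by rewrite inord_val.
  by rewrite -(big_mkord xpredT (fun i => toZ x (inord i) 0)) foldrE big_map /index_iota subn0.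
apply/forallP/allP => [nz _ /mapP [k _ ->] | pm1 i].
  by have := toZ_range x (inord k); rewrite !inE (negPf (nz _)).
have /pm1 : toZ x i 0 \in coords x by rewrite -nth_coords mem_nth ?size_coords.
by rewrite !inE => /orP [] /eqP ->.
Qed.

Lemma E8rootE x : E8root x = (coords x \in roots).
Proof. by rewrite /E8root short_rootsP long_rootsP -mem_cat. Qed.

Lemma roots_codom : {subset roots <= codom coords}.
Proof.
have /allP trits : all (fun v => (size v == 8%N) && all (mem [:: -1; 0; 1]) v) roots.
  by vm_compute.
move=> v /trits /andP [/eqP size_v /allP v_range]; apply/codomP.
exists (ofZ (\col_i nth 0 v i)).
apply: (@eq_from_nth int 0) => [|k]; rewrite ?size_coords ?size_v //.
move=> lt_k; rewrite nth_mkseq // toZ_ofZ mxE inordK // sgz_range //.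
by apply: v_range; rewrite mem_nth ?size_v.
Qed.

Definition vpair (x : Vec) : {set Vec} := [set x; negv x].

Lemma vpair_self x : x \in vpair x.
Proof. by rewrite !inE eqxx. Qed.

Lemma vpair_negv x : vpair (negv x) = vpair x.
Proof. by apply/setP => z; rewrite !inE negvK orbC. Qed.

Lemma vpair_inj x y : vpair x = vpair y -> y = x \/ y = negv x.
Proof.
move=> E; have := vpair_self y.
by rewrite -E !inE => /orP [] /eqP; [left | right].
Qed.

Definition vertices (l : seq (seq int)) : {set {set Vec}} :=
  [set vpair x | x : Vec & coords x \in l].

Lemma verticesP l u : reflect (exists2 x, coords x \in l & u = vpair x) (u \in vertices l).
Proof. by apply: (iffP imsetP) => -[x xl ->]; exists x; rewrite // ?inE in xl *. Qed.

Lemma vertices_sub l l' :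
  {in l, forall u, (u \in l') || (negs u \in l')} -> vertices l \subset vertices l'.
Proof.
move=> cover; apply/subsetP => _ /verticesP [x /cover /orP [xl' | nxl'] ->]; apply/verticesP.
  by exists x.
by exists (negv x); rewrite ?coords_negv ?vpair_negv.
Qed.

Lemma vertices_reps l : vertices (reps negs l) = vertices l.
Proof.
apply/eqP; rewrite eqEsubset !vertices_sub // => u u_l.
  exact: reps_cover u_l.
by rewrite (reps_sub u_l).
Qed.

Lemma card_vertices_reps l :
  {subset l <= codom coords} -> #|vertices (reps negs l)| = size (reps negs l).
Proof.
move=> l_coords; set S := reps negs l.
have vpair_inj_S : {in [set x | coords x \in S] &, injective vpair}.
  move=> x y; rewrite !inE => xS yS /vpair_inj [-> // | yE]; apply: coords_inj; apply: esym.
  by apply: (reps_antipodal negsK yS xS); rewrite yE coords_negv.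
rewrite card_in_imset // cardE.
have: perm_eq (map coords (enum [set x | coords x \in S])) S.
  apply: uniq_perm; first by rewrite (map_inj_uniq coords_inj) enum_uniq.
    exact: reps_uniq.
  move=> u; apply/mapP/idP => [[x] | uS]; first by rewrite mem_enum inE => xS ->.
  have /codomP [x ux] := l_coords u (reps_sub uS).
  by exists x; rewrite ?mem_enum ?inE -?ux.
by move/perm_size; rewrite size_map.
Qed.

Lemma E8vertices_roots : E8vertices = vertices roots.
Proof.
rewrite /E8vertices (_ : [set x | E8root x] = [set x | coords x \in roots]) //.
by apply/setP => x; rewrite !in_set E8rootE.
Qed.

Lemma size_reps_roots : size (reps negs roots) = 120%N.
Proof. by vm_compute. Qed.

Lemma card_E8vertices : #|E8vertices| = 120%N.
Proof.
rewrite E8vertices_roots -vertices_reps card_vertices_reps ?size_reps_roots //.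
exact: roots_codom.
Qed.

Lemma E8verticesP u :
  reflect (exists2 x, coords x \in reps negs roots & u = vpair x) (u \in E8vertices).
Proof. by rewrite E8vertices_roots -vertices_reps; exact: verticesP. Qed.

Lemma sigma_vpair g x : sigma g (vpair x) = vpair (actv g x).
Proof. by rewrite /sigma /vpair imsetU1 imset_set1 actv_negv. Qed.

Lemma Lorbit_vertices x : Lorbit (vpair x) = vertices (orbitc (coords x)).
Proof.
apply/setP => u; apply/imsetP/verticesP => [[g _ ->] | [y /orbitcP [g /coords_inj ->] ->]].
  by exists (actv g x); [apply/orbitcP; exists g | rewrite sigma_vpair].
by exists g; rewrite ?sigma_vpair.
Qed.

(* [if _ then _ else false] rather than [&&]: the VM evaluates both arguments of [andb]. *)
Fixpoint eqs (v w : seq int) : bool :=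
  match v, w with
  | a :: v', b :: w' => if a == b then eqs v' w' else false
  | [::], [::] => true
  | _, _ => false
  end.

Lemma eqsE v w : eqs v w = (v == w).
Proof.
elim: v w => [|a v IH] [|b w] //=; rewrite IH eqseq_cons.
by case: (a == b).
Qed.

Definition mems (l : seq (seq int)) (v : seq int) : bool := has (eqs v) l.

Lemma memsE l v : mems l v = (v \in l).
Proof. by rewrite /mems -has_pred1; apply: eq_has => w; rewrite /= eqsE eq_sym. Qed.

Definition orbit_check (v : seq int) : bool :=
  let O := orbitc v in let S := reps negs O in
  [&& mems O v, all (mems roots) O, size S == 8%N,
      all (fun s => all (fun t => (s == t) || (dots s t == 0)) S) S &
      all (fun s => all (fun u => mems S u || mems S (negs u)) (reps negs (orbitc s))) S].

Lemma orbit_check_reps_roots : all orbit_check (reps negs roots).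
Proof. by vm_compute. Qed.

Section Orbit.

Variable x : Vec.
Hypothesis xR : coords x \in reps negs roots.

Let O := orbitc (coords x).
Let S := reps negs O.

Lemma orbit_facts :
  [/\ coords x \in O, {subset O <= roots}, size S = 8%N,
      {in S &, forall s t, s != t -> dots s t = 0}
    & {in S, forall s, vertices (orbitc s) \subset vertices O}].
Proof.
have /and5P [xO O_roots /eqP size_S orth inv] := allP orbit_check_reps_roots _ xR.
split; first by rewrite -memsE.
- by move=> u /(allP O_roots); rewrite memsE.
- exact: size_S.
- by move=> s t sS tS st; apply/eqP; move: (allP (allP orth s sS) t tS); rewrite (negPf st).
move=> s sS; rewrite -vertices_reps -(vertices_reps O); apply: vertices_sub => u.
by move/(allP (allP inv s sS)); rewrite !memsE.
Qed.

Lemma Lorbit_reps : Lorbit (vpair x) = vertices S.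
Proof. by rewrite Lorbit_vertices vertices_reps. Qed.

Lemma card_Lorbit : #|Lorbit (vpair x)| = 8%N.
Proof.
have [_ _ size_S _ _] := orbit_facts.
rewrite Lorbit_reps card_vertices_reps; first exact: size_S.
by move=> _ /orbitcP [g ->]; exact: codom_f.
Qed.

Lemma Lorbit_clique : is_clique (Lorbit (vpair x)).
Proof.
have [_ _ _ orth _] := orbit_facts.
apply/forallP => u; apply/implyP; rewrite Lorbit_reps => /verticesP [y yS ->].
apply/forallP => w; apply/implyP => /verticesP [z zS ->]; apply/implyP => yz.
have yz' : coords y != coords z by apply: contraNneq yz => /coords_inj ->.
apply/existsP; exists y; rewrite vpair_self andTb; apply/existsP; exists z.
by rewrite vpair_self andTb inner_coords (orth _ _ yS zS yz').
Qed.

Lemma Lorbit_id : vpair x \in Lorbit (vpair x).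
Proof. by have [xO _ _ _ _] := orbit_facts; rewrite Lorbit_vertices; apply/verticesP; exists x. Qed.

Lemma Lorbit_sub_E8vertices : Lorbit (vpair x) \subset E8vertices.
Proof.
have [_ O_roots _ _ _] := orbit_facts.
by rewrite Lorbit_vertices E8vertices_roots; apply: vertices_sub => u /O_roots ->.
Qed.

Lemma Lorbit_sub_Lorbit u : u \in Lorbit (vpair x) -> Lorbit u \subset Lorbit (vpair x).
Proof.
have [_ _ _ _ inv] := orbit_facts.
rewrite Lorbit_reps => /verticesP [y yS ->]; rewrite Lorbit_vertices vertices_reps.
exact: inv yS.
Qed.

End Orbit.

Lemma Lorbit_eq x u : coords x \in reps negs roots -> u \in Lorbit (vpair x) ->
  Lorbit u = Lorbit (vpair x).
Proof.
move=> xR uO; have /E8verticesP [y yR uE] := subsetP (Lorbit_sub_E8vertices xR) u uO.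
apply/eqP; rewrite eqEcard (Lorbit_sub_Lorbit xR uO) andTb uE.
by rewrite (card_Lorbit xR) (card_Lorbit yR).
Qed.

Local Close Scope ring_scope.

Theorem lemma3p4 :
  let orbits := [set Lorbit v | v in E8vertices] in
  [/\ #|orbits| = 15,
      forall O : {set {set Vec}}, O \in orbits -> #|O| = 8 /\ is_clique O
    & partition orbits E8vertices].
Proof.
move=> orbits.
have orbitP O : O \in orbits -> exists2 x, coords x \in reps negs roots & O = Lorbit (vpair x).
  by case/imsetP => _ /E8verticesP [x xR ->] ->; exists x.
have part : partition orbits E8vertices.
  apply/and3P; split.
  - apply/eqP/setP => u; apply/bigcupP/idP => [[_ /orbitP [x xR ->]] | /E8verticesP [x xR ->]].
      exact: subsetP (Lorbit_sub_E8vertices xR) u.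
    exists (Lorbit (vpair x)); last exact: Lorbit_id.
    by apply: imset_f; apply/E8verticesP; exists x.
  - apply/trivIsetP => _ _ /orbitP [x xR ->] /orbitP [y yR ->] xy.
    rewrite -setI_eq0; apply: contraR xy => /set0Pn [u /setIP [ux uy]].
    by rewrite -(Lorbit_eq xR ux) (Lorbit_eq yR uy).
  - by apply/negP => /orbitP [x xR E]; have := Lorbit_id xR; rewrite -E inE.
split=> // [| O /orbitP [x xR ->]]; last by split; [exact: card_Lorbit | exact: Lorbit_clique].
have := card_partition part; rewrite card_E8vertices (eq_bigr (fun=> 8)).
  by rewrite sum_nat_const => /eqP; rewrite -[120]/(15 * 8) eqn_pmul2r // eq_sym => /eqP.
by move=> _ /orbitP [x xR ->]; exact: card_Lorbit.
Qed.
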